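(* For every positive integer $n$, the Wiener indices of the polyphenyl ortho-chain $\overline{O}_n$, the polyphenyl meta-chain $\overline{M}_n$ and the polyphenyl para-chain $\overline{P}_n$ are $$W(\overline{O}_n)=12n^3+36n^2-21n,\quad W(\overline{M}_n)=18n^3+18n^2-9n,\quad W(\overline{P}_n)=24n^3+3n.$$
   Context: The Wiener index is $W(G)=\sum_{\{u,v\}\subseteq V(G)}d_G(u,v)$, $d_G$ the shortest-path distance. A polyphenyl hexagonal chain $\overline{G}_n=\overline{H}_0\cdots\overline{H}_{n-1}$ of length $n$ consists of pairwise vertex-disjoint hexagons $\overline{H}_0,\dots,\overline{H}_{n-1}$ together with cut-edges: $\overline{G}_1=\overline{H}_0$, and for $k\ge1$, $\overline{G}_{k+1}$ is obtained from $\overline{G}_k$ by adding $\overline{H}_k$ and a cut-edge joining a vertex $c_k$ of $\overline{H}_k$ to a vertex $t_k$ of $\overline{H}_{k-1}$, where for $k\ge2$, $t_k\ne c_{k-1}$. For $k\ge1$, vertices of $\overline{H}_k$ at distance $1,2,3$ from $c_k$ are denoted $o_k,m_k,p_k$ (ortho, meta, para). The polyphenyl ortho-chain $\overline{O}_n$ has $t_k=o_{k-1}$ for all $2\le k\le n-1$; the polyphenyl meta-chain $\overline{M}_n$ has $t_k=m_{k-1}$ and the polyphenyl para-chain $\overline{P}_n$ has $t_k=p_{k-1}$ for all $2\le k\le n-1$ (vacuous for $n\le2$). *)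

From mathcomp Require Import all_boot.
Unset Printing Implicit Defensive.

Fixpoint within {T : finType} (e : rel T) (k : nat) (x y : T) : bool :=
  match k with
  | 0 => x == y
  | k'.+1 => within e k' x y || [exists z, within e k' x z && e z y]
  end.

(* Shortest-path distance: least k such that y is reachable from x by a walk
   of length <= k (searched in 0 .. #|T|-1, enough for connected graphs). *)
Definition gdist {T : finType} (e : rel T) (x y : T) : nat :=
  find (fun k => within e k x y) (iota 0 #|T|).

(* Wiener index: sum of distances over unordered pairs {u,v}, computed as
   half of the sum over ordered pairs (distance is symmetric, d(u,u)=0). *)
Definition wiener {T : finType} (e : rel T) : nat :=
  (\sum_(x : T) \sum_(y : T) gdist e x y) %/ 2.

(* Vertex (k, i) is vertex i of hexagon
   H_k, hexagon vertices labelled cyclically 0..5. The attachment vertex c_k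
   of H_k (k >= 1) is labelled 0, and the cut-edge joins c_k = (k,0) to
   t_k = (k-1, t k) in H_(k-1). *)
Definition pchain_edge (n : nat) (t : nat -> 'I_6) : rel ('I_n * 'I_6) :=
  fun a b =>
    ((a.1 == b.1 :> nat) &&
       (((a.2 + 1) %% 6 == b.2) || ((b.2 + 1) %% 6 == a.2)))
    || [&& (b.1 == a.1.+1 :> nat), (b.2 == 0 :> nat) & (a.2 == t b.1)]
    || [&& (a.1 == b.1.+1 :> nat), (a.2 == 0 :> nat) & (b.2 == t a.1)].

Definition hexd (i : nat) : nat := minn i (6 - i).

(* t_k is at distance d from c_(k-1) (= label 0) for all 2 <= k <= n-1:
   d = 1 ortho, d = 2 meta, d = 3 para. t_1 is arbitrary. *)
Definition chain_kind (n : nat) (t : nat -> 'I_6) (d : nat) : Prop :=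
  forall k, 2 <= k <= n.-1 -> hexd (t k) = d.

From mathcomp Require Import all_boot zify.

(* For i < j, a shortest path from vertex x of H_i to vertex y of H_j runs
   inside H_i from x to t_(i+1), through each intermediate hexagon H_k from
   c_k to t_(k+1), and inside H_j from c_j to y.  This explicit distance is
   the graph distance because it vanishes only on the diagonal, grows by at
   most one along an edge, and every other vertex has a neighbour one step
   closer.  Summed over the 36 vertex pairs of H_i and H_j it gives
   144 + 36 l, where l = (j - i - 1)(d + 1) is the distance from c_(i+1) to
   c_j in a chain of kind d; inside one hexagon it gives 54.  Summing over
   all pairs of hexagons, W = 27 n + 72 n (n - 1) + 6 (d + 1) n (n - 1) (n - 2). *)

Definition hex_dist (x y : nat) : nat := hexd ((x - y) + (y - x)).

Definition hex_adj (w y : nat) : bool := ((w + 1) %% 6 == y) || ((y + 1) %% 6 == w).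

Lemma hex_distC x y : hex_dist x y = hex_dist y x.
Proof. by rewrite /hex_dist addnC. Qed.

Lemma hex_distnn x : hex_dist x x = 0.
Proof. by rewrite /hex_dist subnn. Qed.

Lemma hex_dist0n y : hex_dist 0 y = hexd y.
Proof. by rewrite /hex_dist sub0n subn0. Qed.

Lemma hex_dist_le3 x y : hex_dist x y <= 3.
Proof. rewrite /hex_dist /hexd; lia. Qed.

Lemma hex_dist_eq0 x y : x < 6 -> y < 6 -> (hex_dist x y == 0) = (x == y).
Proof. rewrite /hex_dist /hexd => ? ?; lia. Qed.

Lemma hex_dist_adj x y w : x < 6 -> y < 6 -> w < 6 -> hex_adj w y ->
  hex_dist x y <= (hex_dist x w).+1.
Proof. rewrite /hex_adj /hex_dist /hexd => ? ? ? /orP[] /eqP; lia. Qed.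

Lemma hex_dist_pred x y : x < 6 -> y < 6 -> x != y ->
  exists2 w, w < 6 & hex_adj w y && ((hex_dist x w).+1 == hex_dist x y).
Proof.
have witnesses : all (fun x => all (fun y => (x != y) ==>
    has (fun w => hex_adj w y && ((hex_dist x w).+1 == hex_dist x y)) (iota 0 6))
  (iota 0 6)) (iota 0 6) by [].
move=> x6 y6 xy.
have /allP/(_ x) := witnesses; rewrite mem_iota => /(_ x6)/allP/(_ y).
rewrite mem_iota => /(_ y6)/implyP/(_ xy)/hasP[w]; rewrite mem_iota.
by exists w.
Qed.

Lemma sum_hex_dist y : y < 6 -> \sum_(x < 6) hex_dist x y = 9.
Proof. by rewrite !big_ord_recl big_ord0; case: y => [|[|[|[|[|[|]]]]]]. Qed.

Lemma sum_hexd : \sum_(y < 6) hexd y = 9.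
Proof. by rewrite !big_ord_recl big_ord0. Qed.

Section ChainDistance.

Variable t : nat -> 'I_6.

Definition spine_dist (i j : nat) : nat := \sum_(i <= k < j) (hexd (t k.+1)).+1.

Lemma spine_distnn i : spine_dist i i = 0.
Proof. by rewrite /spine_dist big_geq. Qed.

Lemma spine_dist_recr i j : i <= j ->
  spine_dist i j.+1 = spine_dist i j + (hexd (t j.+1)).+1.
Proof. by move=> ij; rewrite /spine_dist big_nat_recr. Qed.

Lemma spine_dist_recl i j : i < j ->
  spine_dist i j = (hexd (t i.+1)).+1 + spine_dist i.+1 j.
Proof. by move=> ij; rewrite /spine_dist big_ltn. Qed.

Lemma spine_dist_le i j : spine_dist i j <= 4 * (j - i).
Proof.
rewrite /spine_dist mulnC -sum_nat_const_nat big_nat_cond [leqRHS]big_nat_cond.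
by apply: leq_sum => k _; have := hex_dist_le3 0 (t k.+1); rewrite hex_dist0n.
Qed.

Definition chain_dist_lt (i x j y : nat) : nat :=
  (hex_dist x (t i.+1)).+1 + spine_dist i.+1 j + hexd y.

Definition chain_dist (i x j y : nat) : nat :=
  if i == j then hex_dist x y
  else if i < j then chain_dist_lt i x j y else chain_dist_lt j y i x.

(* The vertex through which every shortest path from (i, x) enters H_j. *)
Definition entry (i x j : nat) : nat :=
  if i == j then x else if i < j then 0 else t j.+1.

Lemma entry_lt6 i x j : x < 6 -> entry i x j < 6.
Proof. by rewrite /entry; case: ifP => // _; case: ifP. Qed.

Lemma chain_dist_entry i x j y :
  chain_dist i x j y = chain_dist i x j (entry i x j) + hex_dist (entry i x j) y.
Proof.
rewrite /chain_dist /entry /chain_dist_lt; case: ltngtP => _.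
- by rewrite hex_dist0n addn0.
- by rewrite hex_distnn (hex_distC y); lia.
- by rewrite hex_distnn.
Qed.

Lemma chain_dist_cutr i x k : i <= k ->
  chain_dist i x k.+1 0 = (chain_dist i x k (t k.+1)).+1.
Proof.
move=> ik; rewrite /chain_dist ltn_eqF ?ltnS // ik /chain_dist_lt addn0.
case: ltngtP ik => // [ik|<-] _; last by rewrite spine_distnn addn0.
by rewrite spine_dist_recr //; lia.
Qed.

Lemma chain_dist_cutl i x k : k < i ->
  chain_dist i x k (t k.+1) = (chain_dist i x k.+1 0).+1.
Proof.
move=> ki; rewrite /chain_dist gtn_eqF // ltnNge ltnW //= /chain_dist_lt hex_distnn.
case: (ltngtP i k.+1) => [|ki'|->]; first lia.
- by rewrite spine_dist_recl // hex_dist0n; lia.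
- by rewrite spine_distnn hex_distC hex_dist0n.
Qed.

Lemma chain_dist_eq0 i x j y : x < 6 -> y < 6 ->
  (chain_dist i x j y == 0) = (i == j) && (x == y).
Proof.
move=> x6 y6; rewrite /chain_dist /chain_dist_lt.
case: (eqVneq i j) => _ /=; first exact: hex_dist_eq0.
by case: ifP; rewrite !addSn.
Qed.

Lemma chain_dist_bound n i x j y : i < n -> j < n -> chain_dist i x j y < 6 * n.
Proof.
move=> i_n j_n; have := hex_dist_le3 x y; have := hex_dist_le3 x (t i.+1).
have := hex_dist_le3 y (t j.+1); have := hex_dist_le3 0 x; have := hex_dist_le3 0 y.
rewrite !hex_dist0n /chain_dist /chain_dist_lt.
have := spine_dist_le i.+1 j; have := spine_dist_le j.+1 i.
by case: (ltngtP i j); lia.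
Qed.

Definition chain_adj (k w j y : nat) : bool :=
  ((k == j) && hex_adj w y)
  || [&& j == k.+1, y == 0 & w == t j]
  || [&& k == j.+1, w == 0 & y == t k].

Lemma chain_dist_adj i x k w j y : x < 6 -> w < 6 -> y < 6 ->
  chain_adj k w j y -> chain_dist i x j y <= (chain_dist i x k w).+1.
Proof.
move=> x6 w6 y6; case/orP => [/orP[/andP[/eqP-> wy]|]|].
- rewrite (chain_dist_entry i x j y) (chain_dist_entry i x j w).
  by have := hex_dist_adj _ _ _ (entry_lt6 i x j x6) y6 w6 wy; lia.
- case/and3P=> /eqP-> /eqP-> /eqP->.
  by case: (leqP i k) => [/chain_dist_cutr|/chain_dist_cutl] ->; lia.
- case/and3P=> /eqP-> /eqP-> /eqP->.
  by case: (leqP i j) => [/chain_dist_cutr|/chain_dist_cutl] ->; lia.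
Qed.

Lemma chain_dist_pred n i x j y : i < n -> j < n -> x < 6 -> y < 6 ->
  (i != j) || (x != y) ->
  exists k w, [/\ k < n, w < 6, chain_adj k w j y &
                (chain_dist i x k w).+1 = chain_dist i x j y].
Proof.
move=> i_n j_n x6 y6 ixjy; have [y_entry|y_inner] := eqVneq (entry i x j) y; last first.
  have [w w6 /andP[wy /eqP closer]] := hex_dist_pred _ _ (entry_lt6 i x j x6) y6 y_inner.
  exists j, w; split => //; first by rewrite /chain_adj eqxx wy.
  by rewrite (chain_dist_entry i x j y) (chain_dist_entry i x j w) -closer addnS.
move: y_entry ixjy; rewrite /entry; case: ltngtP => [ij|ji|->] <- //; last by rewrite !eqxx.
- case: j ij j_n => // j ij j_n.
  exists j, (t j.+1); split; [lia | exact: ltn_ord | |].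
  + by rewrite /chain_adj !eqxx !orbT.
  + by rewrite chain_dist_cutr.
- exists j.+1, 0; split => //; first lia.
  + by rewrite /chain_adj !eqxx !orbT.
  + by rewrite chain_dist_cutl.
Qed.

End ChainDistance.

Lemma find_leq_iota m N : m < N -> find (fun k => m <= k) (iota 0 N) = m.
Proof.
suff shifted s : s <= m < s + N -> find (fun k => m <= k) (iota s N) = m - s.
  by move=> mN; rewrite shifted ?subn0.
elim: N s => [|N IH] s /=; first lia.
by move=> sm; case: (leqP m s) => ms; [lia | rewrite IH; lia].
Qed.

Section DistanceFromVertex.

Variables (T : finType) (e : rel T) (D : T -> T -> nat) (a : T).
Hypothesis D_eq0 : forall b, (D a b == 0) = (a == b).
Hypothesis D_edge : forall z b, e z b -> D a b <= (D a z).+1.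
Hypothesis D_pred : forall b, a != b -> exists2 z, e z b & (D a z).+1 = D a b.

Lemma within_dist k b : within e k a b = (D a b <= k).
Proof.
elim: k b => [|k IH] b /=; first by rewrite leqn0 D_eq0.
apply/idP/idP.
- case/orP => [|/existsP[z /andP[]]]; first by rewrite IH => /leqW.
  by rewrite IH => Dz /D_edge Db; apply: leq_trans Db _.
- rewrite leq_eqVlt ltnS; case/orP => [/eqP Dk|]; last by rewrite IH => ->.
  have /D_pred[z ezb Dz] : a != b by rewrite -D_eq0 Dk.
  by apply/orP; right; apply/existsP; exists z; rewrite IH ezb andbT -ltnS Dz Dk.
Qed.

Lemma gdist_eq b : D a b < #|T| -> gdist e a b = D a b.
Proof.
move=> Db; rewrite /gdist -(find_leq_iota _ _ Db).
by apply: eq_find => k; exact: within_dist.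
Qed.

End DistanceFromVertex.

Lemma gdist_pchain n t (a b : 'I_n * 'I_6) :
  gdist (pchain_edge n t) a b = chain_dist t a.1 a.2 b.1 b.2.
Proof.
case: a b => i x [j y].
apply: (gdist_eq _ _ (fun a b : 'I_n * 'I_6 => chain_dist t a.1 a.2 b.1 b.2)).
- by case=> j' y'; rewrite chain_dist_eq0 // xpair_eqE.
- by case=> k w [j' y'] /chain_dist_adj; apply.
- case=> j' y'; rewrite xpair_eqE negb_and => ixjy.
  have [k [w [k_n w6 kwjy <-]]] :=
    @chain_dist_pred t n i x j' y' (ltn_ord i) (ltn_ord j') (ltn_ord x) (ltn_ord y') ixjy.
  by exists (Ordinal k_n, Ordinal w6).
- by rewrite card_prod !card_ord mulnC chain_dist_bound.
Qed.

Lemma sum_chain_dist_lt t i j :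
  \sum_(x < 6) \sum_(y < 6) chain_dist_lt t i x j y = 144 + 36 * spine_dist t i.+1 j.
Proof.
rewrite /chain_dist_lt.
under eq_bigr do rewrite big_split /= sum_hexd sum_nat_const card_ord.
rewrite big_split /= sum_nat_const card_ord -big_distrr /= !big_split /=.
rewrite (eq_bigr (fun x : 'I_6 => hex_dist x (t i.+1) + 1)) => [|x _]; last by rewrite addn1.
by rewrite big_split /= sum_hex_dist // !sum_nat_const !card_ord; lia.
Qed.

Lemma sum_chain_dist t i j : \sum_(x < 6) \sum_(y < 6) chain_dist t i x j y =
  if i == j then 54 else 144 + 36 * spine_dist t (minn i j).+1 (maxn i j).
Proof.
rewrite /chain_dist /minn /maxn; case: ltngtP => ij.
- exact: sum_chain_dist_lt.
- by rewrite exchange_big sum_chain_dist_lt.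
- rewrite exchange_big (eq_bigr (fun _ => 9)) => [|y _]; last exact: sum_hex_dist.
  by rewrite sum_nat_const card_ord.
Qed.

Lemma spine_dist_kind n t d i j : chain_kind n t d -> 0 < i <= j -> j < n ->
  spine_dist t i j = (j - i) * d.+1.
Proof.
move=> kind /andP[i_pos ij] j_n; rewrite /spine_dist -sum_nat_const_nat.
by apply: eq_big_nat => k /andP[ik kj]; rewrite kind //; lia.
Qed.

Definition block_sum (d i j : nat) : nat :=
  if i == j then 54 else 144 + 36 * d.+1 * (maxn i j - (minn i j).+1).

Lemma block_sumC d i j : block_sum d i j = block_sum d j i.
Proof. by rewrite /block_sum eq_sym maxnC minnC. Qed.

Lemma sum_chain_dist_kind n t d i j : chain_kind n t d -> i < n -> j < n ->
  \sum_(x < 6) \sum_(y < 6) chain_dist t i x j y = block_sum d i j.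
Proof.
move=> kind i_n j_n; rewrite sum_chain_dist /block_sum.
by case: eqP => // /eqP ij; rewrite (spine_dist_kind _ _ _ _ _ kind); lia.
Qed.

Lemma double_sum_gap m : 2 * \sum_(i < m) (m - i.+1) = m * (m - 1).
Proof.
elim: m => [|m IH]; first by rewrite big_ord0.
rewrite big_ord_recr /= subnn addn0.
rewrite (eq_bigr (fun i : 'I_m => (m - i.+1) + 1)) => [|i _]; last by have := ltn_ord i; lia.
by rewrite big_split /= sum_nat_const card_ord mulnDr IH; nia.
Qed.

Lemma sum_block_sum_col d m :
  \sum_(i < m) block_sum d i m = 144 * m + 36 * d.+1 * \sum_(i < m) (m - i.+1).
Proof.
rewrite (eq_bigr (fun i : 'I_m => 144 + 36 * d.+1 * (m - i.+1))) => [|i _].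
  by rewrite big_split /= sum_nat_const card_ord big_distrr mulnC.
by rewrite /block_sum; have := ltn_ord i; case: eqP; lia.
Qed.

Lemma sum_block_sum d m : \sum_(i < m) \sum_(j < m) block_sum d i j =
  54 * m + 144 * m * (m - 1) + 12 * d.+1 * m * (m - 1) * (m - 2).
Proof.
elim: m => [|m IH]; first by rewrite big_ord0 !muln0.
rewrite big_ord_recr /=.
rewrite (eq_bigr (fun i : 'I_m => \sum_(j < m) block_sum d i j + block_sum d i m)) => [|i _];
  last by rewrite big_ord_recr.
rewrite big_split /= IH big_ord_recr /=.
rewrite [\sum_(i < m) block_sum d m i](eq_bigr (fun i : 'I_m => block_sum d i m)) => [|i _];
  last exact: block_sumC.
rewrite sum_block_sum_col /block_sum eqxx.
have := double_sum_gap m; move: (\sum_(i < m) _) => Q Q2.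
by case: m IH Q2 => [|[|m]] _ Q2; rewrite /= ?subSS ?subn0; nia.
Qed.

Lemma wiener_chain_kind n t d : chain_kind n t d ->
  wiener (pchain_edge n t) = 27 * n + 72 * n * (n - 1) + 6 * d.+1 * n * (n - 1) * (n - 2).
Proof.
move=> kind; rewrite /wiener.
have pair_sum (F : 'I_n * 'I_6 -> nat) : \sum_p F p = \sum_(i < n) \sum_(x < 6) F (i, x).
  by rewrite pair_big; apply: eq_bigr => -[].
have -> : \sum_a \sum_b gdist (pchain_edge n t) a b = \sum_(i < n) \sum_(j < n) block_sum d i j.
  under eq_bigr do under eq_bigr do rewrite gdist_pchain.
  rewrite pair_sum; apply: eq_bigr => i _; rewrite exchange_big pair_sum /=.
  apply: eq_bigr => j _; rewrite exchange_big /=.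
  exact: sum_chain_dist_kind kind (ltn_ord i) (ltn_ord j).
rewrite sum_block_sum -[RHS](@mulKn _ 2) //; congr (_ %/ 2).
by rewrite !mulnDr !mulnA; lia.
Qed.

Theorem corollary3p3 (n : nat) : 0 < n ->
  (forall t : nat -> 'I_6, chain_kind n t 1 ->
     wiener (pchain_edge n t) = 12 * n ^ 3 + 36 * n ^ 2 - 21 * n) /\
  (forall t : nat -> 'I_6, chain_kind n t 2 ->
     wiener (pchain_edge n t) = 18 * n ^ 3 + 18 * n ^ 2 - 9 * n) /\
  (forall t : nat -> 'I_6, chain_kind n t 3 ->
     wiener (pchain_edge n t) = 24 * n ^ 3 + 3 * n).
Proof.
move=> n_pos; split; [|split] => t kind; rewrite (wiener_chain_kind _ _ _ kind);
  case: n n_pos kind => [|[|m]] // _ _; rewrite subn1 subn2 /=; nia.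
Qed.
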